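(* Let $\Omega$ be a finite set, let $\mathcal K$ be a finite nonempty set of gambles on $\Omega$, and let $\underline{P}_{\mathcal K}$ be a coherent lower prevision on $\mathcal K$. Let $\mathcal M=\{P: P(f)\ge\underline{P}_{\mathcal K}(f)\ \forall f\in\mathcal K\}$ be its credal set, $\operatorname{ext}(\mathcal M)$ its set of extreme points, and $\underline{E}(h)=\min_{P\in\mathcal M}P(h)$ its natural extension. For $f\in\mathcal K$ let $\mathcal M_f=\{P\in\mathcal M: P(f)=\underline{E}(f)\}$ and let $\mathcal E_f$ be the set of extreme points of $\mathcal M_f$. For $E\in\mathcal M$ let $N_{\mathcal M}(E)=\{h: E(h)=\underline{E}(h)\}$, and for linear previsions $E\in\mathcal M$, $F$ define $$d_E(E,F)=\max_{h\in N_{\mathcal M}(E),\,h\neq 0}\frac{F(h)-E(h)}{\|h\|}.$$ Let $\underline{P}$ be any coherent lower prevision on the set of all gambles with $\underline{P}(f)=\underline{P}_{\mathcal K}(f)$ for all $f\in\mathcal K$. Then $$d(\underline{P},\underline{E}):=\max_{\|h\|=1}|\underline{P}(h)-\underline{E}(h)|\le\max_{E\in\operatorname{ext}(\mathcal M)}\ \min_{f\in\mathcal K}\ \max_{F\in\mathcal E_f}d_E(E,F).$$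
   Context: Gambles are real-valued functions on the finite set $\Omega$, identified with vectors in $\mathbb{R}^{\Omega}$, with Euclidean norm $\|h\|=\sqrt{\sum_{x}h(x)^2}$. A linear prevision is the expectation functional $P(f)=\sum_{x}p(x)f(x)$ of a probability mass vector $p$. A lower prevision $\underline{P}$ on a set of gambles $\mathcal H$ is coherent if there is a nonempty closed convex set $\mathcal C$ of linear previsions with $\underline{P}(f)=\min_{P\in\mathcal C}P(f)$ for all $f\in\mathcal H$. Since $\mathcal K$ is finite, $\mathcal M$ is a convex polytope. *)

From HB Require Import structures.
From mathcomp Require Import all_boot all_order all_algebra.
From mathcomp Require Import all_classical all_reals all_analysis.
Set Implicit Arguments. Unset Strict Implicit. Unset Printing Implicit Defensive.
Import Order.TTheory GRing.Theory Num.Theory numFieldNormedType.Exports.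
Local Open Scope classical_set_scope.
Local Open Scope ring_scope.

Section Imprecise.
Variables (R : realType) (T : finType).

Definition gamble := T -> R.

Definition gnorm (h : gamble) : R := Num.sqrt (\sum_(x : T) h x ^+ 2).

(* A linear prevision is represented by its probability mass vector p;
   its value on a gamble f is the expectation P(f) = \sum_x p x * f x. *)
Definition is_pmf (p : T -> R) : Prop :=
  (forall x, 0 <= p x) /\ \sum_(x : T) p x = 1.

Definition prev (p : T -> R) (f : gamble) : R := \sum_(x : T) p x * f x.

Definition convex_pset (C : set (T -> R)) : Prop :=
  forall p q t, C p -> C q -> 0 <= t <= 1 ->
    C (fun x => t * p x + (1 - t) * q x).

Definition ext_points (C : set (T -> R)) : set (T -> R) :=
  [set E | C E /\ forall p q t, C p -> C q -> 0 < t < 1 ->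
             E = (fun x => t * p x + (1 - t) * q x) -> p = q].

(* closedness of a set of mass vectors in R^T (product topology; R^T is
   metrizable, so closedness = sequential closedness under pointwise limits) *)
Definition closed_pset (C : set (T -> R)) : Prop :=
  forall (u : nat -> T -> R) (q : T -> R), (forall n, C (u n)) ->
    (forall x, (fun n => u n x) @ \oo --> q x) -> C q.

Definition is_min_prev (C : set (T -> R)) (f : gamble) (a : R) : Prop :=
  (exists2 p, C p & prev p f = a) /\ (forall p, C p -> a <= prev p f).

(* Coherence of a lower prevision LP on a set of gambles H:
   LP is the lower envelope of a nonempty closed convex set of linear previsions. *)
Definition coherent_on (H : set gamble) (LP : gamble -> R) : Prop :=
  exists C : set (T -> R),
    [/\ C !=set0, closed_pset C, convex_pset C, (forall p, C p -> is_pmf p) &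
        forall f, H f -> is_min_prev C f (LP f)].

Definition credal (K : set gamble) (LP : gamble -> R) : set (T -> R) :=
  [set p | is_pmf p /\ forall f, K f -> LP f <= prev p f].

Definition natext (M : set (T -> R)) (h : gamble) : R :=
  inf [set prev p h | p in M].

Definition Mf (M : set (T -> R)) (f : gamble) : set (T -> R) :=
  [set p | M p /\ prev p f = natext M f].

Definition Ef (M : set (T -> R)) (f : gamble) : set (T -> R) :=
  ext_points (Mf M f).

Definition normal_cone (M : set (T -> R)) (E : T -> R) : set gamble :=
  [set h | prev E h = natext M h].

Definition dE (M : set (T -> R)) (E F : T -> R) : R :=
  sup [set (prev F h - prev E h) / gnorm h
      | h in [set h | normal_cone M E h /\ h <> (fun=> 0)]].

Definition dist_lp (LP LE : gamble -> R) : R :=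
  sup [set `|LP h - LE h| | h in [set h | gnorm h = 1]].

Definition bound (K : set gamble) (M : set (T -> R)) : R :=
  sup [set inf [set sup [set dE M E F | F in Ef M f] | f in K]
      | E in ext_points M].

End Imprecise.

(* Let h be a unit gamble and E an extreme point of the credal set M at which h is minimal,
   so that the natural extension of h is E(h) and h lies in the normal cone N_M(E).
   The lower prevision LP is the lower envelope of a credal set contained in M; for f in K
   it attains LP(f) = PK(f) at some Q, which therefore lies in M_f.  An extreme point F of
   M_f maximising h gives LP(h) <= Q(h) <= F(h), hence
   0 <= LP(h) - E(h) <= F(h) - E(h) <= d_E(E, F).
   Extreme maximisers exist by compactness: among the maximisers of a linear functional,
   one that maximises the strictly convex squared norm is an extreme point. *)

From Pilot Require Import Defs.
From HB Require Import structures.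
From mathcomp Require Import all_boot all_order all_algebra.
From mathcomp Require Import all_classical all_reals all_analysis.
From mathcomp.algebra_tactics Require Import ring lra.
Set Implicit Arguments. Unset Strict Implicit. Unset Printing Implicit Defensive.
Import Order.TTheory GRing.Theory Num.Theory numFieldNormedType.Exports.
Local Open Scope classical_set_scope.
Local Open Scope ring_scope.

(* Without these, [prev] and [gnorm] resolve to MathComp's [path.prev] and [monoid.gnorm]. *)
Local Notation prev := Defs.prev.
Local Notation gnorm := Defs.gnorm.

Section RealSupInf.
Variable R : realType.

Lemma sup_le_ub (E : set R) c : 0 <= c -> (forall y, E y -> y <= c) -> sup E <= c.
Proof.
move=> c0 Ec; have [->|/set0P E0] := eqVneq E set0; first by rewrite sup0.
exact: ge_sup.
Qed.

Lemma finite_set_has_lbound (E : set R) : finite_set E -> has_lbound E.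
Proof.
move=> /finite_compact /(@compact_bounded R R^o) [M [_ /(_ (`|M| + 1))]].
rewrite (le_lt_trans (ler_norm _)) ?ltrDl // => /(_ erefl) EM.
by exists (- (`|M| + 1)) => x /EM /lerNnormlW.
Qed.

End RealSupInf.

Section Pmf.
Variables (R : realType) (T : finType).
Implicit Types (p q E F : T -> R) (h g : gamble R T) (M S : set (T -> R)).

Lemma pmf_le1 p : is_pmf p -> forall x, p x <= 1.
Proof.
move=> [p0 <-] x; rewrite (bigD1 x) //= lerDl.
by apply: sumr_ge0 => y _; exact: p0.
Qed.

Lemma pmf_neq0 p : is_pmf p -> exists x, p x != 0.
Proof.
move=> [_ p1]; apply: contrapT => /forallNP p0; move: p1.
rewrite big1 => [/eqP|x _]; first by rewrite eq_sym oner_eq0.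
by have /negP := p0 x; rewrite negbK => /eqP.
Qed.

Lemma prevN p h : prev p (fun x => - h x) = - prev p h.
Proof. by rewrite /prev -sumrN; apply: eq_bigr => x _; rewrite mulrN. Qed.

Lemma prev_convex_comb p q t g :
  prev (fun x => t * p x + (1 - t) * q x) g = t * prev p g + (1 - t) * prev q g.
Proof. by rewrite /prev !mulr_sumr -big_split; apply: eq_bigr => x _ /=; ring. Qed.

Lemma prev_le_sum_norm p g : is_pmf p -> prev p g <= \sum_x `|g x|.
Proof.
move=> pp; apply: ler_sum => x _; have [p0 _] := pp.
apply: le_trans (ler_norm _) _; rewrite normrM ger0_norm //.
by rewrite -[leRHS]mul1r ler_wpM2r // pmf_le1.
Qed.

Lemma prev_self_le1 p : is_pmf p -> prev p p <= 1.
Proof.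
move=> pp; have [p0 p1] := pp; rewrite -[leRHS]p1; apply: ler_sum => x _.
by rewrite -[leRHS]mulr1 ler_wpM2l // (pmf_le1 pp).
Qed.

Lemma sqr_le_sum_sqr h x : h x ^+ 2 <= \sum_y h y ^+ 2.
Proof.
by rewrite (bigD1 x) //= lerDl; apply: sumr_ge0 => y _; exact: sqr_ge0.
Qed.

Lemma sum_sqr_gt0 h x : h x != 0 -> 0 < \sum_y h y ^+ 2.
Proof.
move=> hx; apply: lt_le_trans (sqr_le_sum_sqr h x).
by rewrite exprn_even_gt0 // hx orbT.
Qed.

Lemma prev_self_convex_comb_lt p q r t : 0 < t < 1 -> p != q ->
  r = (fun x => t * p x + (1 - t) * q x) ->
  prev r r < t * prev p p + (1 - t) * prev q q.
Proof.
move=> /andP[t0 t1] /eqP pq rE; rewrite -subr_gt0.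
have -> : t * prev p p + (1 - t) * prev q q - prev r r =
          t * (1 - t) * \sum_x (p x - q x) ^+ 2.
  rewrite rE /prev mulr_sumr !mulr_sumr -!big_split -sumrB.
  by apply: eq_bigr => x _ /=; ring.
have [x pqx] : exists x, p x - q x != 0.
  apply: contrapT => /forallNP pq0; apply: pq; apply/funext => x.
  by have /negP := pq0 x; rewrite negbK subr_eq0 => /eqP.
by rewrite !mulr_gt0 ?subr_gt0 // (@sum_sqr_gt0 (fun y => p y - q y) x).
Qed.

Lemma abs_le_gnorm h x : `|h x| <= gnorm h.
Proof.
rewrite /gnorm -sqrtr_sqr ler_sqrt ?sqr_le_sum_sqr //.
by apply: sumr_ge0 => y _; exact: sqr_ge0.
Qed.

Lemma gnorm0 : gnorm (fun _ : T => 0 : R) = 0.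
Proof. by rewrite /gnorm big1 ?sqrtr0 // => x _; rewrite expr0n. Qed.

Lemma gnorm_gt0 h : h <> (fun=> 0) -> 0 < gnorm h.
Proof.
move=> h0; have [x hx] : exists x, h x != 0.
  apply: contrapT => /forallNP hx; apply: h0; apply/funext => x.
  by have /negP := hx x; rewrite negbK => /eqP.
by rewrite sqrtr_gt0; exact: sum_sqr_gt0 hx.
Qed.

Lemma gnorm_delta x0 : gnorm (fun x : T => (x == x0)%:R : R) = 1.
Proof.
rewrite /gnorm (bigD1 x0) //= eqxx expr1n big1 ?addr0 ?sqrtr1 //.
by move=> y /negbTE ->; rewrite expr0n.
Qed.

Lemma prev_sub_le_gnorm p q h : is_pmf p -> is_pmf q ->
  prev q h - prev p h <= 2 * gnorm h.
Proof.
move=> [p0 p1] [q0 q1].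
have -> : prev q h - prev p h = \sum_x (q x - p x) * h x.
  by rewrite /prev -sumrB; apply: eq_bigr => x _; rewrite mulrBl.
have -> : 2 * gnorm h = \sum_x (q x + p x) * gnorm h.
  by rewrite -mulr_suml big_split /= q1 p1.
apply: ler_sum => x _; apply: le_trans (ler_norm _) _.
rewrite normrM; apply: ler_pM => //; last exact: abs_le_gnorm.
by apply: le_trans (ler_normB _ _) _; rewrite !ger0_norm.
Qed.

Lemma dE_le2 M E F : is_pmf E -> is_pmf F -> dE M E F <= 2.
Proof.
move=> pE pF; apply: sup_le_ub => // _ [h [_ h0] <-].
by rewrite ler_pdivrMr ?gnorm_gt0 // prev_sub_le_gnorm.
Qed.

End Pmf.

Section Sequences.

Lemma increasing_seq_geq (f : nat -> nat) :
  increasing_seq f -> forall n, (n <= f n)%N.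
Proof.
move=> /increasing_seqP fi; elim=> // n IHn.
exact: leq_ltn_trans IHn (fi n).
Qed.

Lemma increasing_seq_comp (f g : nat -> nat) :
  increasing_seq f -> increasing_seq g -> increasing_seq (f \o g).
Proof. by move=> fi gi m n /=; rewrite fi; exact: gi. Qed.

Lemma cvg_subseq {V : topologicalType} (v : nat -> V) (f : nat -> nat) (l : V) :
  increasing_seq f -> v @ \oo --> l -> (v \o f) @ \oo --> l.
Proof.
move=> fi; apply: cvg_comp => P [N _ NP]; exists N => // n /= Nn.
by apply: NP => /=; exact: leq_trans Nn (increasing_seq_geq fi n).
Qed.

Variable R : realType.

Lemma bounded_fun_norm_le (v : nat -> R) (c : R) :
  (forall n, `|v n| <= c) -> bounded_fun v.
Proof.
move=> vc; rewrite /bounded_near; near=> M => n _ /=.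
by apply: le_trans (vc n) _; near: M; apply: nbhs_pinfty_ge; exact: num_real.
Unshelve. all: by end_near. Qed.

Lemma cvg_ge (v : nat -> R) c l : (forall n, c <= v n) -> v @ \oo --> l -> c <= l.
Proof. by move=> cv; apply: (closed_cvg _ (@closed_ge R c)); exact: nearW. Qed.

Lemma cvg_le (v : nat -> R) c l : (forall n, v n <= c) -> v @ \oo --> l -> l <= c.
Proof. by move=> vc; apply: (closed_cvg _ (@closed_le R c)); exact: nearW. Qed.

Lemma cvg_eq_cst (v : nat -> R) c l : (forall n, v n = c) -> v @ \oo --> l -> l = c.
Proof.
move=> vc vl; apply/eqP; rewrite eq_le.
by rewrite (cvg_le _ vl) ?(cvg_ge _ vl) // => n; rewrite vc.
Qed.

End Sequences.

Section PointwiseConvergence.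
Variables (R : realType) (T : finType).
Implicit Types (u v : nat -> T -> R) (p q g : T -> R) (S : set (T -> R)).

Lemma cvg_sum_ptws u p : (forall x, (fun n => u n x) @ \oo --> p x) ->
  (fun n => \sum_x u n x) @ \oo --> \sum_x p x.
Proof. by move=> up; apply: cvg_big => [|x _]; [exact: add_continuous | exact: up]. Qed.

Lemma cvg_prev u v p g :
  (forall x, (fun n => u n x) @ \oo --> p x) ->
  (forall x, (fun n => v n x) @ \oo --> g x) ->
  (fun n => prev (u n) (v n)) @ \oo --> prev p g.
Proof. by move=> up vg; apply: cvg_sum_ptws => x; exact: cvgM. Qed.

Lemma cvg_ptws_subseq u c : (forall n x, `|u n x| <= c) ->
  exists2 f : nat -> nat, increasing_seq f &
    exists q, forall x, (fun n => u (f n) x) @ \oo --> q x.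
Proof.
move=> uc; suff [f fi fu] : exists2 f : nat -> nat, increasing_seq f &
    forall x, x \in enum T -> cvgn (fun n => u (f n) x).
  exists f => //; exists (fun x => limn (fun n => u (f n) x)) => x.
  by apply: fu; rewrite mem_enum.
elim: (enum T) => [|x s [f fi fu]]; first by exists id.
have [g gi gu] := bolzano_weierstrass (bounded_fun_norm_le (fun n => uc (f n) x)).
exists (f \o g); first exact: increasing_seq_comp.
move=> y; rewrite in_cons => /predU1P[->|ys] //.
have /cvg_ex[l ul] := fu y ys.
by apply/cvg_ex; exists l; exact: cvg_subseq gi ul.
Qed.

Lemma closed_pset_argmax S (J : (T -> R) -> R) :
  S !=set0 -> closed_pset S -> (forall p, S p -> is_pmf p) ->
  (forall u q, (forall x, (fun n => u n x) @ \oo --> q x) ->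
     (fun n => J (u n)) @ \oo --> J q) ->
  has_ubound (J @` S) -> exists2 E, S E & forall p, S p -> J p <= J E.
Proof.
move=> [p0 Sp0] Scl Spmf Jcvg Jub.
have Jsup : has_sup (J @` S) by split => //; exists (J p0), p0.
have /choice[u uS] n : exists p, S p /\ sup (J @` S) - harmonic n < J p.
  have hn : 0 < harmonic n :> R by rewrite /= invr_gt0.
  by have [_ [p Sp <-] ?] := sup_adherent hn Jsup; exists p.
have u1 n x : `|u n x| <= 1.
  have pu := Spmf _ (uS n).1.
  by rewrite ger0_norm ?(pmf_le1 pu) //; exact: pu.1.
have [f fi [q uq]] := cvg_ptws_subseq u1.
have Sq : S q by apply: (Scl (u \o f)) => // n; exact: (uS (f n)).1.
exists q => // p Sp; apply: le_trans (ub_le_sup Jub _) _; first by exists p.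
have Juh : (fun n => J (u (f n)) + harmonic n) @ \oo --> J q + 0.
  by apply: cvgD; [exact: Jcvg | exact: cvg_harmonic].
rewrite addr0 in Juh; apply: cvg_ge Juh => n; rewrite -lerBlDr.
apply: le_trans (ltW (uS (f n)).2); rewrite lerD2l lerN2 /= lef_pV2 ?posrE //.
by rewrite ler_nat ltnS increasing_seq_geq.
Qed.

End PointwiseConvergence.

Section ExtremePoints.
Variables (R : realType) (T : finType).
Implicit Types (p q E : T -> R) (g : gamble R T) (S : set (T -> R)).

Lemma cvg_prev_cst (u : nat -> T -> R) q g :
  (forall x, (fun n => u n x) @ \oo --> q x) ->
  (fun n => prev (u n) g) @ \oo --> prev q g.
Proof. by move=> uq; apply: cvg_prev uq _ => x; exact: cvg_cst. Qed.

Lemma closed_pset_level S g m :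
  closed_pset S -> closed_pset [set p | S p /\ prev p g = m].
Proof.
move=> Scl u q uS uq; split; first by apply: (Scl u) => // n; exact: (uS n).1.
by apply: (cvg_eq_cst _ (@cvg_prev_cst _ _ g uq)) => n; exact: (uS n).2.
Qed.

Lemma credal_closed (K : set (gamble R T)) PK : closed_pset (credal K PK).
Proof.
move=> u q uM uq; split; [split|].
- by move=> x; apply: (cvg_ge _ (uq x)) => n; exact: (uM n).1.1 x.
- by apply: (cvg_eq_cst _ (cvg_sum_ptws uq)) => n; exact: (uM n).1.2.
- move=> f Kf; apply: (cvg_ge _ (@cvg_prev_cst _ _ f uq)) => n.
  exact: (uM n).2 f Kf.
Qed.

Lemma ext_points_argmax_prev S g :
  S !=set0 -> closed_pset S -> (forall p, S p -> is_pmf p) ->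
  exists2 E, ext_points S E & forall p, S p -> prev p g <= prev E g.
Proof.
move=> S0 Scl Spmf.
have [E1 SE1 E1max] : exists2 E1, S E1 & forall p, S p -> prev p g <= prev E1 g.
  apply: closed_pset_argmax => // [u q|]; first exact: cvg_prev_cst.
  by exists (\sum_x `|g x|) => _ [p Sp <-]; exact: prev_le_sum_norm (Spmf p Sp).
pose S1 := [set p | S p /\ prev p g = prev E1 g].
have S1pmf p : S1 p -> is_pmf p by move=> [/Spmf].
have [E [SE EgE1] Emax] : exists2 E, S1 E & forall p, S1 p -> prev p p <= prev E E.
  apply: closed_pset_argmax => //; first by exists E1.
  - exact: closed_pset_level.
  - by move=> u q uq; exact: cvg_prev.
  - by exists 1 => _ [p /S1pmf pp <-]; exact: prev_self_le1.
exists E; last by move=> p Sp; rewrite EgE1; exact: E1max.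
split => // p q t Sp Sq t01 Epq; apply: contrapT => /eqP pq.
have EEpq := prev_self_convex_comb_lt t01 pq Epq.
have := prev_convex_comb p q t g; rewrite -Epq => Eg.
have [pg qg] := (E1max p Sp, E1max q Sq); move: t01 => /andP[t0 t1].
have S1p : S1 p by split => //; nra.
have S1q : S1 q by split => //; nra.
have := Emax p S1p; have := Emax q S1q; nra.
Qed.

End ExtremePoints.

Section NaturalExtension.
Variables (R : realType) (T : finType).
Implicit Types (p q E F : T -> R) (h f : gamble R T) (M : set (T -> R)).

Lemma natext_min M h p0 :
  M p0 -> (forall p, M p -> prev p0 h <= prev p h) -> natext M h = prev p0 h.
Proof.
move=> Mp0 p0min; apply/eqP; rewrite eq_le; apply/andP; split.
  by apply: ge_inf; [exists (prev p0 h) => _ [p Mp <-]; exact: p0min | exists p0].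
by apply: lb_le_inf; [exists (prev p0 h), p0 | move=> _ [p Mp <-]; exact: p0min].
Qed.

Lemma sup_dE_le2 M E f :
  is_pmf E -> (forall p, M p -> is_pmf p) -> sup [set dE M E F | F in Ef M f] <= 2.
Proof.
move=> pE Mpmf; apply: sup_le_ub => // _ [F [[MF _] _] <-].
exact: dE_le2 pE (Mpmf F MF).
Qed.

Lemma ratio_le_sup_dE M E0 h f q :
  closed_pset M -> (forall p, M p -> is_pmf p) -> M E0 ->
  natext M h = prev E0 h -> h <> (fun=> 0) -> Mf M f q ->
  (prev q h - prev E0 h) / gnorm h <= sup [set dE M E0 F | F in Ef M f].
Proof.
move=> Mcl Mpmf ME0 E0h h0 Mfq.
have [F extF Fmax] := ext_points_argmax_prev h (ex_intro _ q Mfq)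
  (closed_pset_level Mcl) (fun p Mfp => Mpmf p Mfp.1).
have MF : M F by case: extF => -[].
apply: (@le_trans _ _ (dE M E0 F)).
  apply: (@le_trans _ _ ((prev F h - prev E0 h) / gnorm h)).
    by rewrite ler_wpM2r ?invr_ge0 ?(ltW (gnorm_gt0 h0)) // lerD2r Fmax.
  apply: ub_le_sup; last by exists h.
  exists 2 => _ [g [_ g0] <-].
  by rewrite ler_pdivrMr ?gnorm_gt0 //; apply: prev_sub_le_gnorm; exact: Mpmf.
apply: ub_le_sup; last by exists F.
by exists 2 => _ [G [[MG _] _] <-]; exact: dE_le2 (Mpmf _ ME0) (Mpmf _ MG).
Qed.

Lemma inf_sup_dE_le_bound (K : set (gamble R T)) M E0 :
  finite_set K -> K !=set0 -> (forall p, M p -> is_pmf p) -> ext_points M E0 ->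
  inf [set sup [set dE M E0 F | F in Ef M f] | f in K] <= bound K M.
Proof.
move=> Kfin [f0 Kf0] Mpmf extE0.
have infle2 E : M E -> inf [set sup [set dE M E F | F in Ef M f] | f in K] <= 2.
  move=> ME; apply: le_trans (sup_dE_le2 f0 (Mpmf E ME) Mpmf).
  apply: ge_inf; last by exists f0.
  exact/finite_set_has_lbound/finite_image.
apply: ub_le_sup; last by exists E0.
by exists 2 => _ [E [ME _] <-]; exact: infle2.
Qed.

End NaturalExtension.

Section CredalSet.
Variables (R : realType) (T : finType).
Variables (K : set (gamble R T)) (PK LP : gamble R T -> R) (C : set (T -> R)).
Hypothesis C_pmf : forall p, C p -> is_pmf p.
Hypothesis LP_min : forall h, is_min_prev C h (LP h).
Hypothesis LP_PK : forall f, K f -> LP f = PK f.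

Local Notation M := (credal K PK).

Lemma sub_credal : C `<=` M.
Proof.
move=> p Cp; split; first exact: C_pmf.
by move=> f Kf; rewrite -LP_PK //; exact: (LP_min f).2.
Qed.

Lemma natext_credal f : K f -> natext M f = PK f.
Proof.
move=> Kf; have [[q Cq qf] _] := LP_min f.
rewrite -LP_PK // -qf; apply: natext_min; first exact: sub_credal.
by move=> p [_ Mp]; rewrite qf LP_PK //; exact: Mp.
Qed.

Lemma lower_prev_gap_le_inf h E0 :
  K !=set0 -> M E0 -> (forall p, M p -> prev E0 h <= prev p h) -> gnorm h = 1 ->
  LP h - prev E0 h <= inf [set sup [set dE M E0 F | F in Ef M f] | f in K].
Proof.
move=> [f0 Kf0] ME0 E0min h1.
have h0 : h <> (fun=> 0).
  by move=> h0; move: h1; rewrite h0 gnorm0 => /eqP; rewrite eq_sym oner_eq0.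
apply: lb_le_inf => [|_ [f Kf <-]].
  by exists (sup [set dE M E0 F | F in Ef M f0]), f0.
have [[q Cq qf] _] := LP_min f.
have Mfq : Mf M f q by split; [exact: sub_credal | rewrite qf LP_PK // natext_credal].
have Mpmf p : M p -> is_pmf p by case.
have := ratio_le_sup_dE (credal_closed (K := K) (PK := PK)) Mpmf ME0
  (natext_min ME0 E0min) h0 Mfq.
apply: le_trans; rewrite h1 divr1 lerD2r; exact: (LP_min h).2.
Qed.

End CredalSet.

Theorem mainTheorem7 (R : realType) (T : finType)
  (K : set (gamble R T)) (PK : gamble R T -> R) (LP : gamble R T -> R) :
  finite_set K -> K !=set0 ->
  coherent_on K PK ->
  coherent_on setT LP ->
  (forall f, K f -> LP f = PK f) ->
  dist_lp LP (natext (credal K PK)) <= bound K (credal K PK).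
Proof.
move=> Kfin K0 _ [C [[p0 Cp0] _ _ C_pmf C_min]] LP_PK.
have LP_min h : is_min_prev C h (LP h) by exact: C_min.
have CM := sub_credal C_pmf LP_min LP_PK.
have Mpmf p : credal K PK p -> is_pmf p by case.
have [x0 _] := pmf_neq0 (C_pmf _ Cp0).
apply: ge_sup => [|_ [h h1 <-]].
  by eexists; exists (fun x => (x == x0)%:R); first exact: gnorm_delta.
have [E0 extE0 E0max] := ext_points_argmax_prev (fun x => - h x)
  (ex_intro _ p0 (CM _ Cp0)) (credal_closed (K := K) (PK := PK)) Mpmf.
have ME0 : credal K PK E0 by case: extE0.
have E0min p : credal K PK p -> prev E0 h <= prev p h.
  by move=> Mp; have := E0max p Mp; rewrite !prevN lerN2.
rewrite (natext_min ME0 E0min) ger0_norm ?subr_ge0; last first.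
  by have [[q Cq <-] _] := LP_min h; exact/E0min/CM.
apply: le_trans (lower_prev_gap_le_inf C_pmf LP_min LP_PK K0 ME0 E0min h1) _.
exact: inf_sup_dE_le_bound.
Qed.
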